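(* Let $G=K_{m_1,\dots,m_k}$ be the complete multipartite graph with $k\ge 1$ parts of sizes $m_1,\dots,m_k\ge 1$, and let $\alpha=\max\{m_1,\dots,m_k\}$. Then $G$ is pseudo-Gorenstein$^{*}$ if and only if $k=2$ and $\alpha$ is odd.
   Context: The complete multipartite graph $K_{m_1,\dots,m_k}$ has vertex set $V_1\sqcup\dots\sqcup V_k$ with $|V_i|=m_i$, and $\{a,b\}$ is an edge iff $a\in V_i$, $b\in V_j$ with $i\ne j$. For a finite simple graph $G$ on vertex set $[N]$, let $S=K[x_1,\dots,x_N]$ ($K$ a field) and $I(G)$ the edge ideal generated by $x_ix_j$, $\{i,j\}\in E(G)$. Let $\alpha(G)$ be the independence number (equal to $\dim S/I(G)$). Write the Hilbert series of $S/I(G)$ uniquely as $(h_0+\dots+h_st^s)/(1-t)^{\alpha(G)}$ with $h_s\ne 0$, and $\mathfrak a(G)=s-\alpha(G)$. $G$ is pseudo-Gorenstein$^{*}$ if $h_s=1$ and $\mathfrak a(G)=0$. *)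

From HB Require Import structures.
From mathcomp Require Import all_boot all_order all_algebra.
Set Implicit Arguments. Unset Strict Implicit. Unset Printing Implicit Defensive.
Import Order.TTheory GRing.Theory Num.Theory.

(* A finite simple graph: vertex finType V, edge relation e (assumed
   symmetric and irreflexive where relevant). Variables x_v, v in V. *)

Definition independent (V : finType) (e : rel V) (A : {set V}) : bool :=
  [forall x in A, forall y in A, ~~ e x y].

Definition alpha (V : finType) (e : rel V) : nat :=
  \max_(A : {set V} | independent e A) #|A|.

(* Hilbert function of S/I(G): dim_K (S/I(G))_d.  Since I(G) is a monomial
   ideal, the residue classes of the monomials x^a not in I(G) form a K-basis
   of S/I(G); x^a lies in I(G) iff some edge {x,y} has a_x > 0 and a_y > 0.
   Exponent vectors of degree d have entries <= d, hence live in
   {ffun V -> 'I_d.+1}. *)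
Definition hilb (V : finType) (e : rel V) (d : nat) : nat :=
  #|[set a : {ffun V -> 'I_d.+1} |
       (\sum_(v : V) (a v : nat) == d) &&
       [forall x, forall y, e x y ==> ((a x == 0 :> nat) || (a y == 0 :> nat))]]|.

Local Open Scope ring_scope.

Definition hnum (V : finType) (e : rel V) (n : nat) : int :=
  \sum_(i < n.+1) ((1 - 'X) ^+ alpha e : {poly int})`_i * (hilb e (n - i))%:Z.

(* G is pseudo-Gorenstein^*: HS = (h_0 + ... + h_s t^s)/(1-t)^alpha with
   h_s <> 0, and h_s = 1 and a(G) = s - alpha = 0. *)
Definition pseudo_gorenstein_star (V : finType) (e : rel V) : Prop :=
  exists h : {poly int},
    (forall n : nat, hnum e n = h`_n) /\
    h != 0 /\
    lead_coef h = 1 /\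
    ((size h).-1)%:Z - (alpha e)%:Z = 0.

Definition multipartite_vertex (k : nat) (m : 'I_k -> nat) : finType :=
  {i : 'I_k & 'I_(m i)}.

Definition multipartite_edge (k : nat) (m : 'I_k -> nat) :
  rel (multipartite_vertex m) := fun x y => tag x != tag y.

(* A monomial lies outside I(G) iff its support is independent, i.e. contained in a single
   part.  Hence H(0) = 1 and H(d) = \sum_i 'C(m_i - 1 + d, m_i - 1) for d > 0, that is
   HS(t) = 1 + \sum_i ((1 - t)^-m_i - 1), and with alpha = max m_i = alpha(G) the
   h-polynomial is (1 - k) (1 - t)^alpha + \sum_i (1 - t)^(alpha - m_i).  The sum has degree
   < alpha.  For k = 1 the h-polynomial therefore has degree < alpha, so a(G) < 0; for k >= 2
   it has degree alpha and leading coefficient (1 - k) (-1)^alpha, which is 1 exactly when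
   k = 2 and alpha is odd.  Power series are handled through truncations, using
   (1 - t)^(M+1) \sum_(d <= n) 'C(M + d, M) t^d = 1 mod t^(n+1). *)

From mathcomp Require Import all_boot all_order all_algebra ring zify.
Import Order.TTheory GRing.Theory Num.Theory.

Set Implicit Arguments.
Unset Strict Implicit.
Unset Printing Implicit Defensive.

Lemma card_ffun_sum_eq n d : 0 < n ->
  #|[set b : {ffun 'I_n -> 'I_d.+1} | \sum_j (b j : nat) == d]| = 'C(n.-1 + d, n.-1).
Proof.
case: n => // n _; rewrite -card_ord_partitions -!sum1dep_card.
rewrite (reindex (fun t : n.+1.-tuple 'I_d.+1 => [ffun j => tnth t j])) /=.
  apply: eq_bigl => t; rewrite big_tuple; congr (_ == _).
  by apply: eq_bigr => j _; rewrite ffunE.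
exists (fun b : {ffun 'I_n.+1 -> 'I_d.+1} => [tuple b j | j < n.+1]) => [t _|b _].
  by apply: eq_from_tnth => j; rewrite tnth_mktuple ffunE.
by apply/ffunP => j; rewrite ffunE tnth_mktuple.
Qed.

Section GraphHilbertSeries.
Variables (V : finType) (e : rel V).

Definition exponent_support d (a : {ffun V -> 'I_d.+1}) : {set V} :=
  [set x | (a x : nat) != 0].

Lemma edge_free_exponentE d (a : {ffun V -> 'I_d.+1}) :
  [forall x, forall y, e x y ==> ((a x == 0 :> nat) || (a y == 0 :> nat))] =
  independent e (exponent_support a).
Proof.
apply/forallP/forallP => H x.
- apply/implyP; rewrite inE => ax; apply/forallP => y; apply/implyP; rewrite inE => ay.
  apply/negP => exy; move: (implyP (forallP (H x) y) exy).
  by rewrite (negbTE ax) (negbTE ay).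
- apply/forallP => y; apply/implyP => exy; apply/contraT; rewrite negb_or => /andP[ax ay].
  move/implyP: (H x); rewrite inE => /(_ ax)/forallP/(_ y)/implyP.
  by rewrite inE exy => /(_ ay).
Qed.

Lemma hilb0 : hilb e 0 = 1.
Proof.
have ord1 (u : 'I_1) : (u : nat) = 0 by case: u => [[]].
rewrite /hilb (_ : [set _ | _] = setT) ?cardsT ?card_ffun ?card_ord ?exp1n //.
apply/setP => a; rewrite !inE big1 ?eqxx /= => [|v _]; last exact: ord1.
by apply/forallP => x; apply/forallP => y; rewrite !ord1 eqxx implybT.
Qed.

Local Open Scope ring_scope.

Lemma hnum_coefM n :
  hnum e n = ((1 - 'X) ^+ alpha e * \poly_(d < n.+1) (hilb e d)%:Z)`_n.
Proof. by rewrite coefM; apply: eq_bigr => i _; rewrite coef_poly ltnS leq_subr. Qed.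

Lemma pseudo_gorenstein_starE (h : {poly int}) :
  (forall n, hnum e n = h`_n) ->
  pseudo_gorenstein_star e <-> [/\ h != 0, lead_coef h = 1 & (size h).-1 = alpha e].
Proof.
move=> hE; split => [[h' [h'E [h'_neq0 [lead_h' size_h']]]] | [h_neq0 lead_h size_h]].
  have -> : h = h' by apply/polyP => n; rewrite -hE h'E.
  by split=> //; apply/eqP; rewrite -eqz_nat -subr_eq0 size_h'.
by exists h; rewrite size_h subrr.
Qed.

End GraphHilbertSeries.

Section MultipartiteHilbertFunction.
Variables (k : nat) (m : 'I_k -> nat).
Local Notation V := (multipartite_vertex m).
Local Notation e := (@multipartite_edge k m).
Local Notation vertex i j := (Tagged (fun i => 'I_(m i)) (j : 'I_(m i))).

Definition part i : {set V} := [set x | tag x == i].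

Lemma sum_multipartite_part (F : V -> nat) i :
  (forall x, tag x != i -> F x = 0) -> \sum_x F x = \sum_(j < m i) F (vertex i j).
Proof.
move=> F_out; rewrite -(big_pred1_eq addn i (fun i => \sum_(j < m i) F (vertex i j))).
rewrite sig_big_dep /= (bigID (mem (part i))) /=.
rewrite [X in _ + X]big1 ?addn0 => [|x]; last by rewrite inE; exact: F_out.
by apply: eq_big => [x|[i' j] _]; rewrite ?inE ?andbT.
Qed.

Lemma card_part i : #|part i| = m i.
Proof.
rewrite -sum1_card big_mkcond /= (@sum_multipartite_part _ i) => [|x]; last first.
  by rewrite inE => /negbTE ->.
by rewrite -[RHS]card_ord -sum1_card; apply: eq_bigr => j _; rewrite inE eqxx.
Qed.

Lemma independent_multipartite (A : {set V}) x0 :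
  x0 \in A -> independent e A = (A \subset part (tag x0)).
Proof.
move=> x0A; apply/forallP/subsetP => [indA y yA | sub_part x].
  by move/implyP/(_ yA)/forallP/(_ x0)/implyP/(_ x0A): (indA y); rewrite inE negbK.
apply/implyP => xA; apply/forallP => y; apply/implyP => yA.
by move: (sub_part x xA) (sub_part y yA); rewrite !inE negbK => /eqP -> /eqP ->.
Qed.

Lemma alpha_multipartite : alpha e = \max_i m i.
Proof.
apply/eqP; rewrite eqn_leq; apply/andP; split; apply/bigmax_leqP.
  move=> A indA; have [->|[x0 x0A]] := set_0Vmem A; first by rewrite cards0.
  rewrite (independent_multipartite x0A) in indA.
  by rewrite (leq_trans (subset_leq_card indA)) // card_part leq_bigmax.
move=> i _; rewrite -card_part; apply: leq_bigmax_cond.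
apply/forallP => x; apply/implyP; rewrite inE => /eqP xi.
apply/forallP => y; apply/implyP; rewrite inE => /eqP yi.
by rewrite /multipartite_edge xi yi eqxx.
Qed.

Definition part_exponents d i : {set {ffun V -> 'I_d.+1}} :=
  [set a : {ffun V -> 'I_d.+1} |
     (\sum_v (a v : nat) == d) && (exponent_support a \subset part i)].

Lemma hilb_multipartite_parts d : 0 < d -> hilb e d = \sum_i #|part_exponents d i|.
Proof.
move=> d_gt0; rewrite /hilb -sum1dep_card.
under [RHS]eq_bigr do rewrite -sum1dep_card big_mkcond.
rewrite exchange_big big_mkcond /=; apply: eq_bigr => a _.
rewrite edge_free_exponentE.
have [sum_a | _] := eqVneq (\sum_v (a v : nat)) d; last by rewrite big1.
have /existsP[x0 supp_x0] : [exists x, x \in exponent_support a].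
  apply: contraTT d_gt0 => /existsPn a0; rewrite -sum_a big1 // => x _.
  by move: (a0 x); rewrite inE negbK => /eqP.
rewrite (independent_multipartite supp_x0) (bigD1 (tag x0)) //= big1 ?addn0 // => i i_neq.
case: subsetP => // /(_ x0 supp_x0).
by rewrite inE eq_sym (negbTE i_neq).
Qed.

(* The cast [insub] of [tagged x] into 'I_(m i) always succeeds once [tag x == i]. *)
Definition extend_by_zero d i (b : {ffun 'I_(m i) -> 'I_d.+1}) : {ffun V -> 'I_d.+1} :=
  [ffun x : V => if tag x == i then oapp b ord0 (insub (tagged x : nat)) else ord0].

Lemma extend_by_zero_vertex d i (b : {ffun 'I_(m i) -> 'I_d.+1}) j :
  extend_by_zero b (vertex i j) = b j.
Proof. by rewrite ffunE /= eqxx valK. Qed.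

Lemma extend_by_zero_out d i (b : {ffun 'I_(m i) -> 'I_d.+1}) x :
  tag x != i -> extend_by_zero b x = ord0.
Proof. by rewrite ffunE => /negbTE ->. Qed.

Lemma extend_by_zero_inj d i : injective (@extend_by_zero d i).
Proof.
by move=> b1 b2 eq_b; apply/ffunP => j; rewrite -!(extend_by_zero_vertex _ j) eq_b.
Qed.

Lemma card_part_exponents d i :
  #|part_exponents d i| = #|[set b : {ffun 'I_(m i) -> 'I_d.+1} | \sum_j (b j : nat) == d]|.
Proof.
rewrite -(card_imset _ (@extend_by_zero_inj d i)); apply: eq_card => a.
apply/idP/imsetP => [|[b]]; rewrite inE.
  case/andP=> sum_a /subsetP supp_a.
  have a_out x : tag x != i -> a x = ord0.
    move=> x_out; apply/val_inj/eqP; apply: contraR x_out => ax.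
    by have := supp_a x; rewrite !inE => ->.
  exists [ffun j => a (vertex i j)].
    rewrite inE; under eq_bigr do rewrite ffunE.
    by rewrite -(@sum_multipartite_part (fun x => a x : nat)) // => x /a_out ->.
  apply/ffunP => -[i' j]; have [i'i|i_neq] := eqVneq i' i.
    by subst i'; rewrite extend_by_zero_vertex ffunE.
  by rewrite extend_by_zero_out ?a_out.
move=> sum_b ->; rewrite inE (@sum_multipartite_part _ i) => [|x /extend_by_zero_out -> //].
under eq_bigr do rewrite extend_by_zero_vertex.
rewrite sum_b; apply/subsetP => x; rewrite !inE.
by apply: contraR => /extend_by_zero_out ->.
Qed.

Lemma hilb_multipartite d : (forall i, 0 < m i) -> 0 < d ->
  hilb e d = \sum_i 'C((m i).-1 + d, (m i).-1).
Proof.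
move=> m_gt0 d_gt0; rewrite hilb_multipartite_parts //; apply: eq_bigr => i _.
by rewrite card_part_exponents card_ffun_sum_eq.
Qed.

End MultipartiteHilbertFunction.

Local Open Scope ring_scope.

(* The truncation at degree n of (1 - t)^-(M+1) = \sum_d 'C(M + d, M) t^d. *)
Definition binom_series (M n : nat) : {poly int} := \poly_(d < n.+1) ('C(M + d, M))%:R.

Lemma mul_one_subX_binom_series0 n : (1 - 'X) * binom_series 0 n = 1 - 'X^(n.+1).
Proof.
rewrite /binom_series poly_def; under eq_bigr do rewrite bin0 scale1r.
by rewrite -opprB mulNr -subrX1 opprB.
Qed.

Lemma mul_one_subX_binom_seriesS M n :
  (1 - 'X) * binom_series M.+1 n = binom_series M n - ('C(M.+1 + n, M.+1))%:R *: 'X^(n.+1).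
Proof.
apply/polyP => j; rewrite mulrBl mul1r coefB coefXM coefB coefZ coefXn !coef_poly.
case: j => [|j] /=; first by rewrite !addn0 !binn mulr0 !subr0.
rewrite !ltnS eqSS; case: (ltngtP j n) => [j_lt_n|//|->]; last by rewrite mulr1.
  by rewrite mulr0 subr0 addnS binS natrD [X in X - _]addrC addrK addSnnS.
by rewrite mulr0 !subr0.
Qed.

Lemma exp_one_subX_binom_series M n :
  exists R : {poly int}, (1 - 'X) ^+ M.+1 * binom_series M n = 1 - 'X^(n.+1) * R.
Proof.
elim: M => [|M [R IH]]; first by exists 1; rewrite expr1 mul_one_subX_binom_series0 mulr1.
exists (R + (1 - 'X) ^+ M.+1 * ('C(M.+1 + n, M.+1))%:R%:P).
by rewrite exprSr -mulrA mul_one_subX_binom_seriesS -mul_polyC mulrBr IH; ring.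
Qed.

Lemma coef_exp_one_subX_binom_series a M n : (M < a)%N ->
  ((1 - 'X) ^+ a * binom_series M n)`_n = ((1 - 'X) ^+ (a - M.+1))`_n.
Proof.
move=> M_lt_a; have [R R_def] := exp_one_subX_binom_series M n.
rewrite -(subnK M_lt_a) exprD -mulrA R_def addnK mulrBr mulr1 coefB.
by rewrite mulrA [_ * 'X^_]mulrC -mulrA coefXnM ltnSn subr0.
Qed.

Section OneSubXPowers.
Variable R : idomainType.

Lemma one_subX_scale : (1 - 'X : {poly R}) = -1 *: ('X - 1%:P).
Proof. by rewrite scaleN1r opprB polyC1. Qed.

Lemma size_exp_one_subX n : size ((1 - 'X : {poly R}) ^+ n) = n.+1.
Proof. by rewrite one_subX_scale exprZn size_scale ?signr_eq0 ?size_exp_XsubC. Qed.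

Lemma lead_coef_exp_one_subX n : lead_coef ((1 - 'X : {poly R}) ^+ n) = (-1) ^+ n.
Proof.
by rewrite one_subX_scale exprZn lead_coefZ lead_coef_exp lead_coefXsubC expr1n mulr1.
Qed.

End OneSubXPowers.

Section MultipartiteHPolynomial.
Variables (k : nat) (m : 'I_k -> nat).
Hypothesis m_gt0 : forall i, (0 < m i)%N.
Local Notation e := (@multipartite_edge k m).
Local Notation alpha_m := (\max_(i < k) m i).

Lemma hilb_series_multipartite n :
  \poly_(d < n.+1) (hilb e d)%:Z = 1 + \sum_i (binom_series (m i).-1 n - 1).
Proof.
apply/polyP => -[|d]; rewrite coef_poly coefD coef1 coef_sum.
  by rewrite hilb0 big1 ?addr0 // => i _; rewrite coefB coef1 coef_poly addn0 binn subrr.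
under eq_bigr do rewrite coefB coef1 coef_poly subr0 /=.
rewrite add0r; case: ifP => [d_lt|_]; last by rewrite big1.
by rewrite hilb_multipartite // -natz natr_sum.
Qed.

Definition h_multipartite : {poly int} :=
  (1 - k%:R)%:P * (1 - 'X) ^+ alpha_m + \sum_i (1 - 'X) ^+ (alpha_m - m i).

Lemma hnum_multipartite n : hnum e n = h_multipartite`_n.
Proof.
rewrite hnum_coefM alpha_multipartite hilb_series_multipartite.
rewrite mulrDr mulr1 mulr_sumr coefD coef_sum.
under [X in _ + X]eq_bigr => i _ do rewrite mulrBr mulr1 coefB
  coef_exp_one_subX_binom_series ?prednK ?m_gt0 ?leq_bigmax //.
rewrite sumrB sumr_const card_ord /h_multipartite coefD coefCM coef_sum.
by rewrite mulrBl mul1r mulr_natl; ring.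
Qed.

Lemma size_sum_exp_one_subX :
  (size (\sum_i (1 - 'X : {poly int}) ^+ (alpha_m - m i))%R <= alpha_m)%N.
Proof.
apply: leq_trans (size_sum _ _ _) _; apply/bigmax_leqP => i _.
have m_le := leq_bigmax i (F := m).
by rewrite size_exp_one_subX ltn_subrL m_gt0 (leq_trans (m_gt0 i)).
Qed.

Lemma size_h_multipartite_one_part : k = 1%N -> (size h_multipartite <= alpha_m)%N.
Proof.
move=> k1; rewrite /h_multipartite; have -> : 1 - k%:R = 0 :> int by rewrite k1 subrr.
by rewrite polyC0 mul0r add0r size_sum_exp_one_subX.
Qed.

Lemma size_lead_coef_h_multipartite : k != 1%N ->
  size h_multipartite = alpha_m.+1 /\
  lead_coef h_multipartite = (1 - k%:R) * (-1) ^+ alpha_m.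
Proof.
move=> k_neq1; have c_neq0 : (1 - k%:R : int) != 0 by apply/eqP; lia.
have size_top : size ((1 - k%:R)%:P * (1 - 'X : {poly int}) ^+ alpha_m) = alpha_m.+1.
  by rewrite size_Cmul // size_exp_one_subX.
have size_lt := size_sum_exp_one_subX; rewrite -ltnS -size_top in size_lt.
rewrite /h_multipartite size_polyDl // lead_coefDl // size_top.
by rewrite mul_polyC lead_coefZ lead_coef_exp_one_subX.
Qed.

End MultipartiteHPolynomial.

Lemma one_sub_mul_signr_eq1 (k a : nat) : (1 < k)%N ->
  (1 - k%:R) * (-1) ^+ a = 1 :> int <-> k = 2%N /\ odd a.
Proof.
by move=> k_gt1; rewrite -signr_odd; case: (odd a); rewrite ?expr1 ?expr0; lia.
Qed.

Local Close Scope ring_scope.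

Theorem corollary3p2 (k : nat) (m : 'I_k -> nat) :
  (1 <= k)%N -> (forall i, (1 <= m i)%N) ->
  pseudo_gorenstein_star (@multipartite_edge k m) <->
  (k = 2%N /\ odd (\max_(i < k) m i)).
Proof.
move=> k_gt0 m_gt0.
rewrite (pseudo_gorenstein_starE (hnum_multipartite m_gt0)) alpha_multipartite.
have alpha_gt0 : 0 < \max_(i < k) m i := leq_trans (m_gt0 (Ordinal k_gt0)) (leq_bigmax _).
have [k1|k_neq1] := eqVneq k 1.
  have size_h_le := size_h_multipartite_one_part m_gt0 k1.
  split=> [[_ _ size_h]|[k2 _]]; last by rewrite k2 in k1.
  by move: size_h_le alpha_gt0; rewrite -size_h; case: (size _) => [|n] /=; lia.
have [size_h lead_h] := size_lead_coef_h_multipartite m_gt0 k_neq1.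
have k_gt1 : 1 < k by lia.
rewrite -size_poly_gt0 size_h lead_h -(one_sub_mul_signr_eq1 _ k_gt1).
by split=> [[]|].
Qed.
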